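(* Let $X$ be a metric space, $Y$ a complete metric space, and $f_0\colon X \to Y$ an embedding such that $f_0^{-1}\colon f_0(X) \to X$ is uniformly continuous; put $Y_0 = f_0(X)$. Consider the infinite two-player game in which, for each move number $k \geq 1$: Player I chooses a number $\varepsilon_k > 0$ (possibly depending on all previous moves); then Player II chooses a map $g_k\colon Y_{k-1} \to Y$ which is an embedding, satisfies $d_Y(g_k(y), y) < \varepsilon_k$ for all $y \in Y_{k-1}$, and has uniformly continuous inverse $g_k^{-1}\colon g_k(Y_{k-1}) \to Y_{k-1}$; one then sets $f_k = g_k \circ f_{k-1}$ and $Y_k = g_k(Y_{k-1}) = f_k(X)$. Player I wins if the pointwise limit $f = \lim_{k\to\infty} f_k\colon X \to Y$ exists and is an embedding of $X$ into $Y$. Then Player I has a winning strategy.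
   Context: An embedding is a continuous injective map that is a homeomorphism onto its image. *)

From Stdlib Require Export Reals List.
Open Scope R_scope.

Notation MS := Metric_Space.
Notation pt := Base.
Notation d := dist.

Definition cauchy_seq {Y : MS} (u : nat -> pt Y) : Prop :=
  forall e, 0 < e -> exists N, forall m n, (N <= m)%nat -> (N <= n)%nat ->
    d Y (u m) (u n) < e.

Definition seq_converges_to {Y : MS} (u : nat -> pt Y) (l : pt Y) : Prop :=
  forall e, 0 < e -> exists N, forall n, (N <= n)%nat -> d Y (u n) l < e.

Definition complete (Y : MS) : Prop :=
  forall u : nat -> pt Y, cauchy_seq u -> exists l, seq_converges_to u l.

Definition continuous_on {A B : MS} (S : pt A -> Prop) (h : pt A -> pt B) : Prop :=
  forall x, S x -> forall e, 0 < e -> exists de, 0 < de /\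
    forall x', S x' -> d A x x' < de -> d B (h x) (h x') < e.

Definition injective_on {A B : MS} (S : pt A -> Prop) (h : pt A -> pt B) : Prop :=
  forall x x', S x -> S x' -> h x = h x' -> x = x'.

Definition inverse_continuous_on {A B : MS} (S : pt A -> Prop) (h : pt A -> pt B) : Prop :=
  forall x, S x -> forall e, 0 < e -> exists de, 0 < de /\
    forall x', S x' -> d B (h x) (h x') < de -> d A x x' < e.

Definition inverse_unif_continuous_on {A B : MS} (S : pt A -> Prop) (h : pt A -> pt B) : Prop :=
  forall e, 0 < e -> exists de, 0 < de /\
    forall x x', S x -> S x' -> d B (h x) (h x') < de -> d A x x' < e.

Definition embedding_on {A B : MS} (S : pt A -> Prop) (h : pt A -> pt B) : Prop :=
  continuous_on S h /\ injective_on S h /\ inverse_continuous_on S h.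

Definition embedding {A B : MS} (h : pt A -> pt B) : Prop :=
  embedding_on (fun _ => True) h.

Definition image {A B : Type} (h : A -> B) : B -> Prop :=
  fun y => exists x, h x = y.

(* A move of Player II is represented by a map Y -> Y; only its restriction to
   the current set Y_{k-1} matters (all conditions refer to that restriction). *)

(* f_k, with moves indexed from 0: g 0 is the first move g_1. *)
Fixpoint fk {X Y : MS} (f0 : pt X -> pt Y) (g : nat -> pt Y -> pt Y) (k : nat)
  : pt X -> pt Y :=
  match k with
  | O => f0
  | S k' => fun x => g k' (fk f0 g k' x)
  end.

Definition history {Y : MS} (g : nat -> pt Y -> pt Y) (k : nat) : list (pt Y -> pt Y) :=
  map g (seq 0 k).

(* A strategy of Player I: positive number as a function of the previous moves
   of Player II (Player I's own previous moves are determined by these). *)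
Definition strategyI (Y : MS) : Type := list (pt Y -> pt Y) -> R.

Definition legal_move {Y : MS} (Ycur : pt Y -> Prop) (eps : R) (gk : pt Y -> pt Y) : Prop :=
  embedding_on Ycur gk /\
  (forall y, Ycur y -> d Y (gk y) y < eps) /\
  inverse_unif_continuous_on Ycur gk.

Definition play_follows {X Y : MS} (f0 : pt X -> pt Y) (sigma : strategyI Y)
  (g : nat -> pt Y -> pt Y) : Prop :=
  forall k, legal_move (image (fk f0 g k)) (sigma (history g k)) (g k).

Definition player_I_wins {X Y : MS} (f0 : pt X -> pt Y) (g : nat -> pt Y -> pt Y) : Prop :=
  exists f : pt X -> pt Y,
    (forall x, seq_converges_to (fun k => fk f0 g k x) (f x)) /\ embedding f.

From Stdlib Require Import Reals List.
From Stdlib Require Import Lra Lia ClassicalEpsilon Classical.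
Open Scope R_scope.

(* Player I keeps the moves geometrically small relative to a running minimum
   [m k] of moduli of uniform continuity of the inverses [f_j^-1] (j <= k), where
   the modulus [delta_j] guarantees that [d(f_j x, f_j x') < delta_j] forces
   [d(x, x') < 2^-j].  With [eps_k = m k * 2^-(k+3)] the maps [f_k] converge
   uniformly and [d(f x, f_k x) <= m k / 4]; hence [d(f x, f x') < m N / 2]
   gives [d(f_N x, f_N x') < delta_N] and so [d(x, x') < 2^-N].  This makes
   [f^-1] uniformly continuous, while [f] is continuous as a uniform limit of
   continuous maps. *)

Lemma half_pow_pos n : 0 < (/2) ^ n.
Proof. apply pow_lt; lra. Qed.

Lemma half_pow_le1 n : (/2) ^ n <= 1.
Proof. induction n as [|n IH]; simpl; [lra|]. pose proof (half_pow_pos n); lra. Qed.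

Lemma half_pow_lt e : 0 < e -> exists N, (/2) ^ N < e.
Proof.
  intros He. destruct (pow_lt_1_zero (/2)) with (y := e) as [N HN]; auto.
  - rewrite Rabs_right; lra.
  - exists N. specialize (HN N (le_n _)).
    rewrite Rabs_right in HN; [exact HN | left; apply half_pow_pos].
Qed.

Lemma dist_self_zero (M : MS) (x : pt M) : d M x x = 0.
Proof. apply (dist_refl M); reflexivity. Qed.

Section MetricFacts.

Variables A B C : MS.

Lemma continuous_comp (f : pt A -> pt B) (h : pt B -> pt C) :
  continuous_on (fun _ => True) f -> continuous_on (image f) h ->
  continuous_on (fun _ => True) (fun x => h (f x)).
Proof.
  intros Hf Hh x _ e He.
  destruct (Hh (f x) (ex_intro _ x eq_refl) e He) as [dh [Hdh Hh']].
  destruct (Hf x I dh Hdh) as [df [Hdf Hf']].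
  exists df; split; [exact Hdf|].
  intros x' _ Hx'. apply Hh'; [exists x'; reflexivity | apply Hf'; auto].
Qed.

Lemma inverse_unif_continuous_comp (f : pt A -> pt B) (h : pt B -> pt C) :
  inverse_unif_continuous_on (fun _ => True) f ->
  inverse_unif_continuous_on (image f) h ->
  inverse_unif_continuous_on (fun _ => True) (fun x => h (f x)).
Proof.
  intros Hf Hh e He.
  destruct (Hf e He) as [df [Hdf Hf']].
  destruct (Hh df Hdf) as [dh [Hdh Hh']].
  exists dh; split; [exact Hdh|].
  intros x x' _ _ Hx. apply Hf'; auto. apply Hh'; [eexists | eexists |]; eauto.
Qed.

Lemma continuous_of_uniform_limit (F : nat -> pt A -> pt B) (f : pt A -> pt B)
    (r : nat -> R) :
  (forall N, continuous_on (fun _ => True) (F N)) ->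
  (forall N x, d B (f x) (F N x) <= r N) ->
  (forall e, 0 < e -> exists N, r N < e) ->
  continuous_on (fun _ => True) f.
Proof.
  intros HF Hr Hsmall x _ e He.
  destruct (Hsmall (e / 3)) as [N HN]; [lra|].
  destruct (HF N x I (e / 3)) as [de [Hde HFN]]; [lra|].
  exists de; split; [exact Hde|].
  intros x' _ Hx'. specialize (HFN x' I Hx').
  pose proof (Hr N x). pose proof (Hr N x').
  pose proof (dist_tri B (f x) (f x') (F N x)).
  pose proof (dist_tri B (F N x) (f x') (F N x')).
  rewrite (dist_sym B (F N x') (f x')) in *. lra.
Qed.

Lemma embedding_of_inverse_moduli (f : pt A -> pt B) :
  continuous_on (fun _ => True) f ->
  (forall N, exists de, 0 < de /\
     forall x x', d B (f x) (f x') < de -> d A x x' < (/2) ^ N) ->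
  embedding f.
Proof.
  intros Hc Hmod. split; [exact Hc | split].
  - intros x x' _ _ Heq. apply NNPP. intros Hne.
    assert (Hpos : 0 < d A x x').
    { destruct (dist_pos A x x') as [|H0]; [lra|].
      exfalso. apply Hne, (dist_refl A). exact H0. }
    destruct (half_pow_lt _ Hpos) as [N HN].
    destruct (Hmod N) as [de [Hde H]].
    assert (d A x x' < (/2) ^ N) by (apply H; rewrite Heq, dist_self_zero; lra).
    lra.
  - intros x _ e He. destruct (half_pow_lt e He) as [N HN].
    destruct (Hmod N) as [de [Hde H]].
    exists de; split; [exact Hde|].
    intros x' _ Hx'. pose proof (H x x' Hx'). lra.
Qed.

Lemma dist_limit_le (u : nat -> pt A) (l y : pt A) (k : nat) (r : R) :
  seq_converges_to u l -> (forall n, (k <= n)%nat -> d A (u n) y <= r) ->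
  d A l y <= r.
Proof.
  intros Hu Hr. apply Rnot_lt_le. intros Hlt.
  destruct (Hu (d A l y - r)) as [N HN]; [lra|].
  specialize (HN (k + N)%nat ltac:(lia)). specialize (Hr (k + N)%nat ltac:(lia)).
  pose proof (dist_tri A l y (u (k + N)%nat)).
  rewrite (dist_sym A l (u (k + N)%nat)) in *. lra.
Qed.

Lemma complete_pointwise_limit (u : nat -> pt B -> pt A) :
  complete A -> (forall x, cauchy_seq (fun k => u k x)) ->
  exists f, forall x, seq_converges_to (fun k => u k x) (f x).
Proof.
  intros HA Hu.
  exists (fun x => epsilon (inhabits (u O x)) (seq_converges_to (fun k => u k x))).
  intros x. apply epsilon_spec, HA, Hu.
Qed.

Section GeometricSteps.

Variables (u : nat -> pt A) (c : nat -> R).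
Hypothesis c_antitone : forall i j, (i <= j)%nat -> c j <= c i.
Hypothesis c_nonneg : forall n, 0 <= c n.
Hypothesis dist_step : forall n, d A (u (S n)) (u n) <= c n * (/2) ^ (n + 3).

Lemma dist_shift_le k n : d A (u (k + n)%nat) (u k) <= c k * (/2) ^ (k + 2).
Proof.
  enough (H : d A (u (k + n)%nat) (u k)
              <= c k * (/2) ^ (k + 2) - c k * (/2) ^ (k + n + 2)).
  { pose proof (c_nonneg k). pose proof (half_pow_pos (k + n + 2)). nra. }
  induction n as [|n IH].
  - rewrite Nat.add_0_r, dist_self_zero. lra.
  - pose proof (dist_tri A (u (k + S n)%nat) (u k) (u (k + n)%nat)) as Htri.
    pose proof (dist_step (k + n)%nat) as Hs.
    replace (S (k + n)) with (k + S n)%nat in Hs by lia.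
    pose proof (c_antitone k (k + n)%nat ltac:(lia)) as Hc.
    pose proof (half_pow_pos (k + n + 2)) as Hp.
    replace (k + n + 3)%nat with (S (k + n + 2)) in Hs by lia.
    replace (k + S n + 2)%nat with (S (k + n + 2)) by lia.
    simpl in Hs |- *. nra.
Qed.

Hypothesis c_le1 : forall n, c n <= 1.

Lemma geometric_cauchy : cauchy_seq u.
Proof.
  intros e He. destruct (half_pow_lt e He) as [N HN]. exists N.
  intros p q Hp Hq.
  pose proof (dist_shift_le N (p - N)) as Bp.
  pose proof (dist_shift_le N (q - N)) as Bq.
  replace (N + (p - N))%nat with p in Bp by lia.
  replace (N + (q - N))%nat with q in Bq by lia.
  pose proof (dist_tri A (u p) (u q) (u N)).
  rewrite (dist_sym A (u N) (u q)) in *.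
  assert (c N * (/2) ^ (N + 2) <= (/2) ^ N / 4).
  { rewrite pow_add. pose proof (c_le1 N). pose proof (half_pow_pos N).
    simpl. nra. }
  lra.
Qed.

End GeometricSteps.

End MetricFacts.

Section Strategy.

Variables (X Y : MS) (f0 : pt X -> pt Y).

Definition stage (L : list (pt Y -> pt Y)) (x : pt X) : pt Y :=
  fold_left (fun y h => h y) L (f0 x).

Definition inverse_modulus (L : list (pt Y -> pt Y)) (de : R) : Prop :=
  0 < de /\ forall x x', d Y (stage L x) (stage L x') < de -> d X x x' < (/2) ^ length L.

(* When no modulus exists (the moves were illegal) any positive number will do. *)
Definition modulus (L : list (pt Y -> pt Y)) : R :=
  epsilon (inhabits 1)
    (fun de => 0 < de /\ ((exists de', inverse_modulus L de') -> inverse_modulus L de)).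

Lemma modulus_spec L :
  0 < modulus L /\ ((exists de, inverse_modulus L de) -> inverse_modulus L (modulus L)).
Proof.
  unfold modulus. apply epsilon_spec.
  destruct (classic (exists de, inverse_modulus L de)) as [[de Hde]|Hnone].
  - exists de. split; [apply Hde | auto].
  - exists 1. split; [lra | tauto].
Qed.

(* The history is passed reversed, so that the newest move is at the head and
   the moduli of all prefixes are visited by structural recursion. *)
Fixpoint running_min (L : list (pt Y -> pt Y)) : R :=
  match L with
  | nil => Rmin 1 (modulus nil)
  | h :: L' => Rmin (running_min L') (modulus (rev (h :: L')))
  end.

Lemma running_min_pos L : 0 < running_min L.
Proof.
  induction L as [|h L IH]; cbn [running_min]; apply Rmin_pos;
    solve [lra | exact IH | apply (proj1 (modulus_spec _))].
Qed.

Definition sigmaI : strategyI Y :=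
  fun L => running_min (rev L) * (/2) ^ (length L + 3).

Lemma sigmaI_pos L : 0 < sigmaI L.
Proof.
  pose proof (running_min_pos (rev L)). pose proof (half_pow_pos (length L + 3)).
  unfold sigmaI. nra.
Qed.

Lemma history_S (g : nat -> pt Y -> pt Y) k :
  history g (S k) = history g k ++ g k :: nil.
Proof. unfold history. rewrite seq_S, map_app. reflexivity. Qed.

Lemma length_history (g : nat -> pt Y -> pt Y) k : length (history g k) = k.
Proof. unfold history. rewrite length_map, length_seq. reflexivity. Qed.

Lemma stage_history (g : nat -> pt Y -> pt Y) k x : stage (history g k) x = fk f0 g k x.
Proof.
  induction k as [|k IH]; [reflexivity|].
  unfold stage in *. rewrite history_S, fold_left_app. simpl. rewrite IH. reflexivity.
Qed.

Section Play.

Variable g : nat -> pt Y -> pt Y.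
Hypothesis Hf0 : embedding f0.
Hypothesis Hf0u : inverse_unif_continuous_on (fun _ => True) f0.
Hypothesis Hg : play_follows f0 sigmaI g.

Let F := fk f0 g.
Let m k := running_min (rev (history g k)).

Lemma m_S k : m (S k) = Rmin (m k) (modulus (history g (S k))).
Proof.
  unfold m.
  assert (Hrev : rev (history g (S k)) = g k :: rev (history g k))
    by (rewrite history_S, rev_app_distr; reflexivity).
  rewrite Hrev. cbn [running_min]. rewrite <- Hrev, rev_involutive. reflexivity.
Qed.

Lemma m_pos k : 0 < m k.
Proof. apply running_min_pos. Qed.

Lemma m_le1 k : m k <= 1.
Proof.
  induction k as [|k IH].
  - apply Rmin_l.
  - rewrite m_S. eapply Rle_trans; [apply Rmin_l | exact IH].
Qed.

Lemma m_le_modulus k : m k <= modulus (history g k).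
Proof. destruct k; [apply Rmin_r | rewrite m_S; apply Rmin_r]. Qed.

Lemma m_antitone i j : (i <= j)%nat -> m j <= m i.
Proof.
  induction 1 as [|j _ IH]; [lra|].
  rewrite m_S. eapply Rle_trans; [apply Rmin_l | exact IH].
Qed.

Lemma stage_step k x : d Y (F (S k) x) (F k x) <= m k * (/2) ^ (k + 3).
Proof.
  destruct (Hg k) as [_ [Hclose _]]. left.
  unfold sigmaI in Hclose. rewrite length_history in Hclose.
  apply Hclose. exists x. reflexivity.
Qed.

Lemma stage_continuous k : continuous_on (fun _ => True) (F k).
Proof.
  induction k as [|k IH]; [apply Hf0|].
  apply (continuous_comp X Y Y (F k) (g k)); [exact IH | apply (Hg k)].
Qed.

Lemma stage_inverse_unif_continuous k : inverse_unif_continuous_on (fun _ => True) (F k).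
Proof.
  induction k as [|k IH]; [exact Hf0u|].
  apply (inverse_unif_continuous_comp X Y Y (F k) (g k)); [exact IH | apply (Hg k)].
Qed.

Lemma stage_inverse_modulus k x x' : d Y (F k x) (F k x') < m k -> d X x x' < (/2) ^ k.
Proof.
  intros Hd.
  destruct (proj2 (modulus_spec (history g k))) as [_ Hmod].
  - destruct (stage_inverse_unif_continuous k ((/2) ^ k) (half_pow_pos k))
      as [de [Hde Hu]].
    exists de. split; [exact Hde|]. intros z z' Hz.
    rewrite length_history. apply Hu; auto. rewrite !stage_history in Hz. exact Hz.
  - rewrite length_history in Hmod. apply Hmod.
    rewrite !stage_history. pose proof (m_le_modulus k). fold F. lra.
Qed.

Hypothesis HY : complete Y.

Lemma play_converges : exists f, forall x, seq_converges_to (fun k => F k x) (f x).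
Proof.
  apply complete_pointwise_limit; [exact HY|]. intros x.
  apply (geometric_cauchy Y (fun k => F k x) m).
  - exact m_antitone.
  - intros n. left. apply m_pos.
  - exact (fun n => stage_step n x).
  - exact m_le1.
Qed.

Lemma limit_close f :
  (forall x, seq_converges_to (fun k => F k x) (f x)) ->
  forall N x, d Y (f x) (F N x) <= m N * (/2) ^ (N + 2).
Proof.
  intros Hf N x. apply (dist_limit_le Y (fun k => F k x) _ _ N); [apply Hf|].
  intros n Hn. replace n with (N + (n - N))%nat by lia.
  apply (dist_shift_le Y (fun k => F k x) m).
  - exact m_antitone.
  - intros j. left. apply m_pos.
  - exact (fun j => stage_step j x).
Qed.

Lemma play_winning : player_I_wins f0 g.
Proof.
  destruct play_converges as [f Hf]. exists f. split; [exact Hf|].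
  pose proof (limit_close f Hf) as Hclose.
  assert (Hr : forall N, m N * (/2) ^ (N + 2) <= Rmin (m N) ((/2) ^ N) / 4).
  { intros N. rewrite pow_add. pose proof (m_le1 N). pose proof (half_pow_le1 N).
    pose proof (m_pos N). pose proof (half_pow_pos N).
    apply Rmin_case; simpl; nra. }
  apply embedding_of_inverse_moduli.
  - apply (continuous_of_uniform_limit X Y F f (fun N => m N * (/2) ^ (N + 2)));
      [exact stage_continuous | exact Hclose|].
    intros e He. destruct (half_pow_lt e He) as [N HN]. exists N.
    pose proof (Hr N). pose proof (Rmin_r (m N) ((/2) ^ N)).
    pose proof (half_pow_pos N). lra.
  - intros N. exists (m N / 2).
    split; [pose proof (m_pos N); lra|].
    intros x x' Hd. apply stage_inverse_modulus.
    pose proof (Hclose N x). pose proof (Hclose N x').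
    pose proof (Hr N). pose proof (Rmin_l (m N) ((/2) ^ N)).
    pose proof (dist_tri Y (F N x) (F N x') (f x)).
    pose proof (dist_tri Y (f x) (F N x') (f x')).
    rewrite (dist_sym Y (F N x) (f x)) in *. lra.
Qed.

End Play.

End Strategy.

Theorem theorem3p1 (X Y : Metric_Space) (f0 : Base X -> Base Y) :
  complete Y ->
  embedding f0 ->
  inverse_unif_continuous_on (fun _ => True) f0 ->
  exists sigma : strategyI Y,
    (forall h, 0 < sigma h) /\
    forall g : nat -> Base Y -> Base Y,
      play_follows f0 sigma g -> player_I_wins f0 g.
Proof.
  intros HY Hf0 Hf0u. exists (sigmaI X Y f0). split.
  - apply sigmaI_pos.
  - intros g Hg. exact (play_winning X Y f0 g Hf0 Hf0u Hg HY).
Qed.
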